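(* Let $n\ge 2$, let $p>2$ be a prime, $M=(p-1)/2$, and let $\delta>0$ and $R>0$ be parameters such that $R\le n/\delta$, $\frac{n-1}{\delta^2}+n\left(\frac{R}{\delta}+\frac14\right)\le M$, and $|\tilde z_j^{(i)}|\le R$ for all $i\in\{1,2\}$, $j\in\{1,\dots,n\}$. Then the Exact Correlation Protocol (described in the context) implements the computation of the sample Pearson correlation $r$ with controlled leakage for the leakage function $$\ell(\mathbf{x}^{(1)},\mathbf{x}^{(2)})=\Big((\varepsilon_j^{(1)},\varepsilon_j^{(2)})_{j=1}^n,\ \sum_{j=1}^n z_j^{(1)}\varepsilon_j^{(2)},\ \sum_{j=1}^n z_j^{(2)}\varepsilon_j^{(1)}\Big),$$ against a passive (honest-but-curious), computationally unbounded adversary corrupting one of the two participants, assuming the participants have access to an ideal Beaver-triple functionality $\mathcal{F}_{\mathrm{BT}}$.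
   Context: Fixed-point encoding: for a prime $p>2$ and $M=(p-1)/2$, and $\delta>0$, let $\mathbb{Q}_{(M,\delta)}=\{x\delta : x\in\mathbb{Z},\ -M\le x\le M\}$. Define $\varphi_\delta:\mathbb{Q}_{(M,\delta)}\to\mathbb{F}_p$ by $\varphi_\delta(x\delta)=x \bmod p$; it is a bijection with inverse $\varphi_\delta^{-1}(y)=\delta\psi(y)$, where, representing $y\in\mathbb{F}_p$ by an integer in $\{0,\dots,p-1\}$, $\psi(y)=y$ if $y\le M$ and $\psi(y)=y-p$ otherwise. Data: participant $P_i$ ($i=1,2$) privately holds real samples $\mathbf{x}^{(i)}=(x_1^{(i)},\dots,x_n^{(i)})$ (not all equal). Let $\bar x^{(i)}$ be their mean, $s^{(i)}=\sqrt{\frac{1}{n-1}\sum_{j=1}^n(x_j^{(i)}-\bar x^{(i)})^2}$, and $z_j^{(i)}=(x_j^{(i)}-\bar x^{(i)})/s^{(i)}$. The sample Pearson correlation is $r=\frac{1}{n-1}\sum_{j=1}^n z_j^{(1)}z_j^{(2)}$. Each $z_j^{(i)}$ is rounded to a nearest element $\tilde z_j^{(i)}\in\mathbb{Q}_{(M,\delta)}$ and $\varepsilon_j^{(i)}=z_j^{(i)}-\tilde z_j^{(i)}\in[-\delta/2,\delta/2]$. Additive secret sharing: a sharing $[x]$ of $x\in\mathbb{F}_p$ consists of shares $[x]_1,[x]_2\in\mathbb{F}_p$, held by $P_1,P_2$, with $[x]_1+[x]_2=x$; the sharer picks one share uniformly at random. $\mathcal{F}_{\mathrm{BT}}$ supplies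 fresh Beaver triples: sharings $[u],[v],[w]$ with $u,v$ uniform in $\mathbb{F}_p$ and $w=uv$. To multiply $[x],[y]$ with a fresh triple, the participants open $x-u$ and $y-v$, and set $[z]_1=[w]_1+[u]_1(y-v)+[v]_1(x-u)+(x-u)(y-v)$, $[z]_2=[w]_2+[u]_2(y-v)+[v]_2(x-u)$, giving a sharing of $xy$. Exact Correlation Protocol: (1) $P_i$ computes $s^{(i)}$, $z_j^{(i)}$, $\tilde z_j^{(i)}$, $\varepsilon_j^{(i)}$ and sends $(\varepsilon_j^{(i)})_{j=1}^n$ to $P_{3-i}$. (2) $P_i$ computes $\sum_{j=1}^n z_j^{(i)}\varepsilon_j^{(3-i)}$ and sends it to $P_{3-i}$. (3) For each $j$, $P_i$ creates and distributes a sharing $[\varphi_\delta(\tilde z_j^{(i)})]$. (4) The participants compute $[a]=\sum_{j=1}^n[\varphi_\delta(\tilde z_j^{(1)})][\varphi_\delta(\tilde z_j^{(2)})]$ using one Beaver triple per product and local addition of shares. (5) $P_i$ sends $[a]_i$ to $P_{3-i}$; both recover $a$. (6) Each participant outputs $\frac{1}{n-1}\Big(\varphi_{\delta^2}^{-1}(a)+\sum_{i=1}^2\sum_{j=1}^n z_j^{(i)}\varepsilon_j^{(3-i)}-\sum_{j=1}^n\varepsilon_j^{(1)}\varepsilon_j^{(2)}\Big)$. Controlled leakage: In the real world, both participants first send their inputs to a null sink $\mathcal{N}$ (which discards them and replies nothing), then run the protocol using $\mathcal{F}_{\mathrm{BT}}$; $V^\ell_{\mathsf{real}}$ is the view (everything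 seen) of the corrupted participant. In the ideal world, both participants first send their inputs to a leaker $\mathcal{L}$, which gives $\ell(\mathbf{x}^{(1)},\mathbf{x}^{(2)})$ to a simulator $\mathcal{S}$; the honest participant gives its input to an ideal functionality $\mathcal{F}_r$ which outputs $r$ to both; the corrupted participant runs the protocol, but all messages from the honest party and from $\mathcal{F}_{\mathrm{BT}}$ are produced by $\mathcal{S}$, which may extract and submit the corrupted participant's input to $\mathcal{F}_r$ and receive $r$; $V^\ell_{\mathsf{ideal}}$ is the corrupted participant's view. The protocol implements the computation with controlled leakage (for $\ell$) if there is a simulator such that $\Pr[\mathcal{D}(V^\ell_{\mathsf{real}})=\mathsf{real}]=\Pr[\mathcal{D}(V^\ell_{\mathsf{ideal}})=\mathsf{real}]$ for every distinguisher $\mathcal{D}$. *)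

From HB Require Import structures.
From mathcomp Require Import all_boot all_order all_algebra.
From mathcomp Require Import reals.
Set Implicit Arguments. Unset Strict Implicit. Unset Printing Implicit Defensive.
Import Order.TTheory GRing.Theory Num.Theory.
Local Open Scope ring_scope.

Section Defs.
Variables (R : realType) (n p : nat).

Definition mean (x : 'I_n -> R) : R := (\sum_(j < n) x j) / n%:R.
Definition sdev (x : 'I_n -> R) : R :=
  Num.sqrt ((\sum_(j < n) (x j - mean x) ^+ 2) / (n.-1)%:R).
Definition zscore (x : 'I_n -> R) (j : 'I_n) : R := (x j - mean x) / sdev x.
Definition pearson (x1 x2 : 'I_n -> R) : R :=
  (\sum_(j < n) zscore x1 j * zscore x2 j) / (n.-1)%:R.
Definition nonconst (x : 'I_n -> R) : Prop := exists j k : 'I_n, x j <> x k.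

Definition Mp : nat := (p.-1)./2.
Definition inQ (delta q : R) : Prop :=
  exists k : int, - (Mp%:Z) <= k <= Mp%:Z /\ q = k%:~R * delta.
Definition nearest_rounding (delta : R) (rnd : R -> R) : Prop :=
  forall t : R, inQ delta (rnd t) /\
    (forall q, inQ delta q -> `|t - rnd t| <= `|t - q|).
(** phi_delta (x delta) = x mod p  (only used on elements of Q_(M,delta)) *)
Definition phi (delta q : R) : 'F_p := (Num.floor (q / delta))%:~R.
Definition psi (y : 'F_p) : int :=
  if (val y <= Mp)%N then (val y)%:Z else (val y)%:Z - p%:Z.
Definition phiinv (delta : R) (y : 'F_p) : R := delta * (psi y)%:~R.

Variables (delta : R) (rnd : R -> R).
Definition ztil (x : 'I_n -> R) (j : 'I_n) : R := rnd (zscore x j).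
Definition eps (x : 'I_n -> R) (j : 'I_n) : R := zscore x j - ztil x j.
Definition cross (xa xb : 'I_n -> R) : R := \sum_(j < n) zscore xa j * eps xb j.

(** per index j: (r1, r2, (u, v), (su, sv, sw)) where
   r1 = share of phi(z~^(1)_j) that P1 sends to P2 (P1 keeps phi(..) - r1),
   r2 = share of phi(z~^(2)_j) that P2 sends to P1 (P2 keeps phi(..) - r2),
   u, v = Beaver triple values (w = u v),
   su, sv, sw = P1's shares of u, v, w (P2 gets u - su, v - sv, uv - sw). *)
Definition coin : finType := ('F_p * 'F_p * ('F_p * 'F_p) * ('F_p * 'F_p * 'F_p))%type.
Definition coins : finType := {ffun 'I_n -> coin}.

Definition c_r1 (w : coin) : 'F_p := let: (r1, _, _, _) := w in r1.
Definition c_r2 (w : coin) : 'F_p := let: (_, r2, _, _) := w in r2.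
Definition c_u  (w : coin) : 'F_p := let: (_, _, (u, _), _) := w in u.
Definition c_v  (w : coin) : 'F_p := let: (_, _, (_, v), _) := w in v.
Definition c_su (w : coin) : 'F_p := let: (_, _, _, (su, _, _)) := w in su.
Definition c_sv (w : coin) : 'F_p := let: (_, _, _, (_, sv, _)) := w in sv.
Definition c_sw (w : coin) : 'F_p := let: (_, _, _, (_, _, sw)) := w in sw.

Section Run.
Variables (x1 x2 : 'I_n -> R) (om : coins).
Definition xF (j : 'I_n) : 'F_p := phi delta (ztil x1 j).
Definition yF (j : 'I_n) : 'F_p := phi delta (ztil x2 j).
Definition xs1 j := xF j - c_r1 (om j).
Definition xs2 j := c_r1 (om j).
Definition ys1 j := c_r2 (om j).
Definition ys2 j := yF j - c_r2 (om j).
Definition us1 j := c_su (om j).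
Definition us2 j := c_u (om j) - c_su (om j).
Definition vs1 j := c_sv (om j).
Definition vs2 j := c_v (om j) - c_sv (om j).
Definition ws1 j := c_sw (om j).
Definition ws2 j := c_u (om j) * c_v (om j) - c_sw (om j).
Definition d1 j := xs1 j - us1 j.
Definition d2 j := xs2 j - us2 j.
Definition e1 j := ys1 j - vs1 j.
Definition e2 j := ys2 j - vs2 j.
Definition dd j := d1 j + d2 j.
Definition ee j := e1 j + e2 j.
Definition zs1 j := ws1 j + us1 j * ee j + vs1 j * dd j + dd j * ee j.
Definition zs2 j := ws2 j + us2 j * ee j + vs2 j * dd j.
Definition as1 : 'F_p := \sum_(j < n) zs1 j.
Definition as2 : 'F_p := \sum_(j < n) zs2 j.
Definition protocol_output : R :=
  (phiinv (delta ^+ 2) (as1 + as2) + (cross x1 x2 + cross x2 x1)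
     - \sum_(j < n) eps x1 j * eps x2 j) / (n.-1)%:R.
End Run.

(** messages the corrupted party receives from the honest party and from F_BT *)
Record msgs := Msgs {
  m_eps : 'I_n -> R;                      (* step 1: eps^(h) *)
  m_cross : R;                            (* step 2: sum_j z^(h)_j eps^(c)_j *)
  m_shares : 'I_n -> 'F_p;                (* step 3: shares of the honest party's sharings *)
  m_triple : 'I_n -> 'F_p * 'F_p * 'F_p;  (* step 4: own shares of u_j, v_j, w_j from F_BT *)
  m_open : 'I_n -> 'F_p * 'F_p;           (* step 4: honest shares of x_j - u_j and y_j - v_j *)
  m_a : 'F_p                              (* step 5: honest share of a *)
}.
Record view := View {
  v_input : 'I_n -> R;
  v_coins : 'I_n -> 'F_p;
  v_msgs : msgs
}.

(** real view; c = true : P1 corrupted, c = false : P2 corrupted *)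
Definition real_view (c : bool) (x1 x2 : 'I_n -> R) (om : coins) : view :=
  if c then
    View x1 (fun j => c_r1 (om j))
      (Msgs (eps x2) (cross x2 x1) (fun j => c_r2 (om j))
         (fun j => (us1 om j, vs1 om j, ws1 om j))
         (fun j => (d2 om j, e2 x2 om j)) (as2 x1 x2 om))
  else
    View x2 (fun j => c_r2 (om j))
      (Msgs (eps x1) (cross x1 x2) (fun j => c_r1 (om j))
         (fun j => (us2 om j, vs2 om j, ws2 om j))
         (fun j => (d1 x1 om j, e1 om j)) (as1 x1 x2 om)).

Record leak := Leak {
  l_eps1 : 'I_n -> R; l_eps2 : 'I_n -> R; l_cross12 : R; l_cross21 : R }.
Definition leakage (x1 x2 : 'I_n -> R) : leak :=
  Leak (eps x1) (eps x2) (cross x1 x2) (cross x2 x1).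

(** ideal view: the corrupted party's input and uniformly random own coins;
   all other messages produced by the simulator, which gets the leakage, the
   corrupted party's input and coins (i.e. everything it sends), r from F_r,
   and its own uniform randomness from a finite type ST. *)
Definition ideal_view (ST : finType)
  (Sim : leak -> ('I_n -> R) -> {ffun 'I_n -> 'F_p} -> R -> ST -> msgs)
  (c : bool) (x1 x2 : 'I_n -> R) (t : {ffun 'I_n -> 'F_p} * ST) : view :=
  let xc := if c then x1 else x2 in
  View xc (fun j => t.1 j) (Sim (leakage x1 x2) xc t.1 (pearson x1 x2) t.2).

End Defs.

Definition prob (R : realType) (T : finType) (P : pred T) : R :=
  #|[pred t | P t]|%:R / #|T|%:R.

(* With z~ = z - eps, the identity
     sum_j z~1_j z~2_j = (n-1) r - sum_j z1_j eps2_j - sum_j z2_j eps1_j + sum_j eps1_j eps2_j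
   holds exactly.  Each z~_j is an integer multiple k_j delta, and Beaver
   multiplication makes the two shares of a add up to K = sum_j k1_j k2_j in F_p.
   Since z_j^2 <= n-1 and |eps_j| <= delta/2, the parameter condition gives
   |K delta^2| <= (n-1) + n (R delta + delta^2/4) <= M delta^2, so K lies in [-M, M]
   and phi^-1 recovers K delta^2 exactly.

   The messages of steps 1 and 2 are part of the leakage.  Once the
   honest input is fixed, the random coins are in bijection with the corrupted
   party's own coins together with the messages of steps 3 and 4 it receives,
   because each of them is masked by a fresh uniform element of F_p.  The last
   message is a minus the corrupted party's own share, and by the identity
   above a is a function of r and the leakage.  So the simulator draws the
   messages of steps 3 and 4 uniformly, and both views are images of the
   uniform distribution under the same bijection. *)

From HB Require Import structures.
From mathcomp Require Import all_boot all_order all_algebra.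
From mathcomp Require Import reals.
From mathcomp Require Import ring lra zify.
From Stdlib Require Import FunctionalExtensionality.
Import Order.TTheory GRing.Theory Num.Theory.
Set Implicit Arguments. Unset Strict Implicit. Unset Printing Implicit Defensive.
Local Open Scope ring_scope.

Lemma Mp_oddE p : odd p -> p = (Mp p).*2.+1.
Proof.
by case: p => // p /= op; rewrite /Mp /= -{1}(odd_double_half p) (negbTE op).
Qed.

Section FixedPoint.
Variables (R : realType) (p : nat).
Hypotheses (p_pr : prime p) (p_odd : odd p).

Lemma psi_intr (k : int) : - (Mp p)%:Z <= k <= (Mp p)%:Z -> psi (k%:~R : 'F_p) = k.
Proof.
move=> /andP[klo khi]; have pE := Mp_oddE p_odd.
have valE j : val (j%:R : 'F_p) = (j %% p)%N := val_Fp_nat p_pr j.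
rewrite /psi; case: k klo khi => [m|m] klo khi.
  have -> : (m%:Z%:~R : 'F_p) = m%:R by [].
  have mM : (m <= Mp p)%N by lia.
  by rewrite valE modn_small ?mM; lia.
have -> : ((Negz m)%:~R : 'F_p) = (p - m.+1)%N%:R.
  by rewrite NegzE mulrNz natrB ?pchar_Fp_0 ?sub0r //; lia.
rewrite valE modn_small; last by lia.
have -> : (p - m.+1 <= Mp p)%N = false by lia.
rewrite NegzE; lia.
Qed.

Lemma phiinv_intr (d : R) (k : int) : - (Mp p)%:Z <= k <= (Mp p)%:Z ->
  phiinv d (k%:~R : 'F_p) = d * k%:~R.
Proof. by move=> /psi_intr; rewrite /phiinv => ->. Qed.

Lemma phi_intr_mul (d : R) (k : int) : d != 0 -> phi p d (k%:~R * d) = k%:~R.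
Proof. by move=> d0; rewrite /phi mulfK // intrKfloor. Qed.

End FixedPoint.

Section Rounding.
Variables (R : realType) (p : nat) (delta : R) (rnd : R -> R).
Hypotheses (delta_gt0 : 0 < delta) (rnd_nearest : nearest_rounding p delta rnd).

Lemma rnd_floorE t : rnd t = (Num.floor (rnd t / delta))%:~R * delta.
Proof.
have [[k [_ ->]] _] := rnd_nearest t.
by rewrite mulfK ?gt_eqF // intrKfloor.
Qed.

Lemma rnd_err_le t : `|t| <= (Mp p)%:R * delta -> `|t - rnd t| <= delta / 2.
Proof.
move=> t_le; set y := t / delta.
have tE : t = y * delta by rewrite /y divfK // gt_eqF.
have /andP[ylo yhi] : - (Mp p)%:R <= y <= (Mp p)%:R.
  by rewrite -ler_norml /y normf_div (gtr0_norm delta_gt0) ler_pdivrMr.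
set k := Num.floor (y + 1 / 2).
have /andP[klo khi] := floor_itv (y + 1 / 2); rewrite -/k intrD in khi.
have k_inQ : inQ p delta (k%:~R * delta).
  exists k; split => //; apply/andP; split.
    by rewrite /k floor_ge_int mulrNz; lra.
  suff : k < (Mp p)%:Z + 1 by lia.
  by rewrite /k floor_lt_int intrD; lra.
have [_ /(_ _ k_inQ) err_le] := rnd_nearest t; apply: le_trans err_le _.
have y_k : `|y - k%:~R| <= 1 / 2 by rewrite ler_norml; apply/andP; split; lra.
rewrite tE -mulrBl normrM (gtr0_norm delta_gt0).
by have := ler_wpM2r (ltW delta_gt0) y_k; lra.
Qed.

End Rounding.

Section Statistics.
Variables (R : realType) (n : nat).
Hypothesis n_gt1 : (1 < n)%N.

Lemma natr_pred_neq0 : (n.-1)%:R != 0 :> R.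
Proof. by rewrite pnatr_eq0; lia. Qed.

Lemma sum_zscore_sqr (x : 'I_n -> R) : nonconst x ->
  \sum_(j < n) zscore x j ^+ 2 = (n.-1)%:R.
Proof.
move=> [j [k xjk]]; set S := \sum_(j < n) (x j - mean x) ^+ 2.
have S_ge0 : 0 <= S by apply: sumr_ge0 => i _; apply: sqr_ge0.
have S_neq0 : S != 0.
  apply: contra_notN xjk => /eqP /psumr_eq0P S0.
  have xE i : x i = mean x.
    by apply/eqP; rewrite -subr_eq0 -sqrf_eq0 S0 // => ? _; apply: sqr_ge0.
  by rewrite !xE.
have sdev_sqr : sdev x ^+ 2 = S / (n.-1)%:R by rewrite sqr_sqrtr // divr_ge0.
rewrite (eq_bigr (fun i => (x i - mean x) ^+ 2 / sdev x ^+ 2)); last first.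
  by move=> i _; rewrite expr_div_n.
rewrite -mulr_suml sdev_sqr -/S.
by field; rewrite S_neq0 natr_pred_neq0.
Qed.

Lemma zscore_sqr_le (x : 'I_n -> R) j : nonconst x -> zscore x j ^+ 2 <= (n.-1)%:R.
Proof.
move=> x_nc; rewrite -(sum_zscore_sqr x_nc) (bigD1 j) //= lerDl.
by apply: sumr_ge0 => i _; apply: sqr_ge0.
Qed.

Lemma norm_sum_zscore_mul_le (x1 x2 : 'I_n -> R) : nonconst x1 -> nonconst x2 ->
  `|\sum_(j < n) zscore x1 j * zscore x2 j| <= (n.-1)%:R.
Proof.
move=> x1_nc x2_nc; apply: le_trans (ler_norm_sum _ _ _) _.
have amgm (a b : R) : `|a * b| <= (a ^+ 2 + b ^+ 2) / 2.
  have := sqr_ge0 (a - b); have := sqr_ge0 (a + b).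
  by rewrite ler_norml; move=> *; apply/andP; split; nra.
apply: le_trans (ler_sum _ (fun j _ => amgm _ _)) _.
by rewrite -mulr_suml big_split /= !sum_zscore_sqr //; lra.
Qed.

Lemma pearsonE (x1 x2 : 'I_n -> R) :
  (n.-1)%:R * pearson x1 x2 = \sum_(j < n) zscore x1 j * zscore x2 j.
Proof. by rewrite /pearson mulrC divfK // natr_pred_neq0. Qed.

End Statistics.

Lemma beaver_mulE (F : comRingType) (x1 x2 y1 y2 u1 u2 v1 v2 w1 w2 : F) :
  w1 + w2 = (u1 + u2) * (v1 + v2) ->
  let d := (x1 - u1) + (x2 - u2) in let e := (y1 - v1) + (y2 - v2) in
  (w1 + u1 * e + v1 * d + d * e) + (w2 + u2 * e + v2 * d) = (x1 + x2) * (y1 + y2).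
Proof.
move=> wE d e; have -> : w2 = (u1 + u2) * (v1 + v2) - w1 by rewrite -wE addrC addKr.
by rewrite /d /e; ring.
Qed.

Section Protocol.
Variables (R : realType) (n p : nat) (delta : R) (rnd : R -> R).
Hypotheses (delta_gt0 : 0 < delta) (rnd_nearest : nearest_rounding p delta rnd).

Definition zint (x : 'I_n -> R) (j : 'I_n) : int := Num.floor (ztil rnd x j / delta).

Lemma ztilE (x : 'I_n -> R) j : ztil rnd x j = (zint x j)%:~R * delta.
Proof. exact: rnd_floorE. Qed.

Lemma as1_add_as2 (x1 x2 : 'I_n -> R) (om : coins n p) :
  as1 delta rnd x1 x2 om + as2 delta rnd x1 x2 om
  = (\sum_(j < n) zint x1 j * zint x2 j)%:~R.
Proof.
rewrite /as1 /as2 -big_split rmorph_sum; apply: eq_bigr => j _ /=.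
rewrite beaver_mulE; first by rewrite /xs1 /xs2 /ys1 /ys2 subrK addrC subrK intrM.
by rewrite /ws1 /ws2 /us1 /us2 /vs1 /vs2; ring.
Qed.

Lemma sum_ztil_mul (x1 x2 : 'I_n -> R) : \sum_(j < n) ztil rnd x1 j * ztil rnd x2 j
  = (\sum_(j < n) zint x1 j * zint x2 j)%:~R * delta ^+ 2.
Proof.
rewrite rmorph_sum mulr_suml; apply: eq_bigr => j _.
by rewrite !ztilE rmorphM; ring.
Qed.

Lemma sum_ztil_mulE (x1 x2 : 'I_n -> R) : (1 < n)%N ->
  \sum_(j < n) ztil rnd x1 j * ztil rnd x2 j
    = (n.-1)%:R * pearson x1 x2 - cross rnd x1 x2 - cross rnd x2 x1
      + \sum_(j < n) eps rnd x1 j * eps rnd x2 j.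
Proof.
move=> n_gt1; rewrite pearsonE // /cross -!sumrB -big_split /=.
by apply: eq_bigr => j _; rewrite /eps; ring.
Qed.

Definition decode_a (L : leak R n) (r : R) : 'F_p :=
  phi p (delta ^+ 2) ((n.-1)%:R * r - l_cross12 L - l_cross21 L
                      + \sum_(j < n) l_eps1 L j * l_eps2 L j).

Lemma decode_a_leakage (x1 x2 : 'I_n -> R) : (1 < n)%N ->
  decode_a (leakage rnd x1 x2) (pearson x1 x2) = (\sum_(j < n) zint x1 j * zint x2 j)%:~R.
Proof.
move=> n_gt1; rewrite /decode_a /= -sum_ztil_mulE // sum_ztil_mul.
by rewrite phi_intr_mul // expf_neq0 // gt_eqF.
Qed.

End Protocol.

Lemma norm_err_mul_le (R : realFieldType) (a b c d B e : R) :
  `|a| <= B -> `|b| <= B -> `|c| <= e -> `|d| <= e ->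
  `|a * d + c * b + c * d| <= 2 * B * e + e ^+ 2.
Proof.
move=> a_le b_le c_le d_le.
have d_ge0 := normr_ge0 d; have c_ge0 := normr_ge0 c.
have ad := ler_pM (normr_ge0 a) d_ge0 a_le d_le.
have cb := ler_pM c_ge0 (normr_ge0 b) c_le b_le.
have cd := ler_pM c_ge0 d_ge0 c_le d_le.
have := ler_normD (a * d + c * b) (c * d); have := ler_normD (a * d) (c * b).
by rewrite !normrM; lra.
Qed.

Section Correctness.
Variables (R : realType) (n p : nat) (delta Rb : R) (rnd : R -> R).
Hypotheses (n_gt1 : (1 < n)%N) (p_pr : prime p) (p_gt2 : (2 < p)%N).
Hypotheses (delta_gt0 : 0 < delta) (Rb_ge0 : 0 <= Rb).
Hypothesis rnd_nearest : nearest_rounding p delta rnd.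
Hypothesis params :
  (n.-1)%:R / delta ^+ 2 + n%:R * (Rb / delta + 1 / 4) <= (Mp p)%:R.

Let p_odd : odd p.
Proof. by have := p_gt2; case: (even_prime p_pr) => [->|]. Qed.

Let paramsM : (n.-1)%:R + n%:R * (2 * Rb * (delta / 2) + (delta / 2) ^+ 2)
              <= (Mp p)%:R * delta ^+ 2.
Proof.
have -> : (n.-1)%:R + n%:R * (2 * Rb * (delta / 2) + (delta / 2) ^+ 2)
  = ((n.-1)%:R / delta ^+ 2 + n%:R * (Rb / delta + 1 / 4)) * delta ^+ 2.
  by field; rewrite gt_eqF.
by apply: ler_wpM2r => //; apply: sqr_ge0.
Qed.

Lemma norm_eps_le (x : 'I_n -> R) j : nonconst x -> `|eps rnd x j| <= delta / 2.
Proof.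
move=> x_nc; apply: rnd_err_le => //.
set M := (Mp p)%:R : R.
have M_ge1 : 1 <= M by rewrite ler1n; have := Mp_oddE p_odd; lia.
have Md_ge0 : 0 <= M * delta by rewrite mulr_ge0 // ?ltW // (le_trans ler01).
suff : `|zscore x j| ^+ 2 <= (M * delta) ^+ 2 by rewrite ler_sqr ?nnegrE.
rewrite real_normK ?num_real // [(M * delta) ^+ 2]exprMn.
have err_ge0 : 0 <= n%:R * (2 * Rb * (delta / 2) + (delta / 2) ^+ 2).
  have := sqr_ge0 (delta / 2); have := mulr_ge0 Rb_ge0 (ltW delta_gt0).
  by move=> *; apply: mulr_ge0 => //; lra.
have M_sqr : M * delta ^+ 2 <= M ^+ 2 * delta ^+ 2.
  by rewrite ler_wpM2r ?sqr_ge0 // expr2 ler_peMl // (le_trans ler01).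
by have := zscore_sqr_le n_gt1 j x_nc; have := paramsM; rewrite -/M; lra.
Qed.

Section Inputs.
Variables (x1 x2 : 'I_n -> R).
Hypotheses (x1_nc : nonconst x1) (x2_nc : nonconst x2).
Hypothesis ztil_le : forall j, `|ztil rnd x1 j| <= Rb /\ `|ztil rnd x2 j| <= Rb.

Lemma norm_sum_ztil_mul_le :
  `|\sum_(j < n) ztil rnd x1 j * ztil rnd x2 j| <= (Mp p)%:R * delta ^+ 2.
Proof.
pose err j := ztil rnd x1 j * eps rnd x2 j + eps rnd x1 j * ztil rnd x2 j
             + eps rnd x1 j * eps rnd x2 j.
have -> : \sum_(j < n) ztil rnd x1 j * ztil rnd x2 j
          = \sum_(j < n) zscore x1 j * zscore x2 j - \sum_(j < n) err j.
  by rewrite -sumrB; apply: eq_bigr => j _; rewrite /err /eps; ring.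
have err_le j : `|err j| <= 2 * Rb * (delta / 2) + (delta / 2) ^+ 2.
  by have [] := ztil_le j; move=> *; apply: norm_err_mul_le => //; apply: norm_eps_le.
have sum_err_le :
    `|\sum_(j < n) err j| <= n%:R * (2 * Rb * (delta / 2) + (delta / 2) ^+ 2).
  rewrite -[X in X%:R](card_ord n) mulr_natl -sumr_const.
  by apply: le_trans (ler_norm_sum _ _ _) (ler_sum _ (fun j _ => err_le j)).
have := norm_sum_zscore_mul_le n_gt1 x1_nc x2_nc.
have := ler_normB (\sum_(j < n) zscore x1 j * zscore x2 j) (\sum_(j < n) err j).
by have := paramsM; lra.
Qed.

Lemma sum_zint_mul_range :
  - (Mp p)%:Z <= \sum_(j < n) zint delta rnd x1 j * zint delta rnd x2 j <= (Mp p)%:Z.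
Proof.
have := norm_sum_ztil_mul_le; rewrite (sum_ztil_mul delta_gt0 rnd_nearest) normrM.
rewrite (ger0_norm (sqr_ge0 _)) ler_pM2r ?exprn_gt0 //.
by rewrite -ler_norml -(ler_int R) intr_norm.
Qed.

Lemma protocol_output_correct (om : coins n p) :
  protocol_output delta rnd x1 x2 om = pearson x1 x2.
Proof.
rewrite /protocol_output as1_add_as2 phiinv_intr ?sum_zint_mul_range //.
rewrite [delta ^+ 2 * _]mulrC -(sum_ztil_mul delta_gt0 rnd_nearest) sum_ztil_mulE //.
by apply: (canLR (mulfK (natr_pred_neq0 R n_gt1))); ring.
Qed.

End Inputs.

End Correctness.

Lemma prob_bij (R : realType) (T1 T2 : finType) (g : T1 -> T2) (P : pred T2) (Q : pred T1) :
  bijective g -> (forall t, P (g t) = Q t) -> prob R P = prob R Q.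
Proof.
move=> g_bij PQ; rewrite /prob (bij_eq_card g_bij); congr (_%:R / _).
rewrite -!sum1_card (reindex g) /=; last exact: onW_bij.
by apply: eq_bigl => t; rewrite !inE /= PQ.
Qed.

Lemma ffun_pair_bij (I A B C : finType) (g : I -> A * B -> C) (h : I -> C -> A * B) :
  (forall i, cancel (g i) (h i)) -> (forall i, cancel (h i) (g i)) ->
  bijective (fun t : {ffun I -> A} * {ffun I -> B} => [ffun i => g i (t.1 i, t.2 i)]).
Proof.
move=> gK hK.
exists (fun f : {ffun I -> C} => ([ffun i => (h i (f i)).1], [ffun i => (h i (f i)).2])).
  move=> [t1 t2]; congr (_, _); apply/ffunP => i; rewrite !ffunE gK //.
by move=> f; apply/ffunP => i; rewrite !ffunE -surjective_pairing hK.
Qed.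

(* The share of [x] (or [y]) received in step 3, the own shares of the Beaver
   triple, and the honest shares of [x - u] and [y - v] opened in step 4. *)
Definition sim_msg p := ('F_p * ('F_p * 'F_p * 'F_p) * ('F_p * 'F_p))%type.

Section CoinsAndViews.
Variable p : nat.

(* [view_of_coin c xh] reads off one coordinate of the coins the corrupted
   party's own coin and the [sim_msg] it receives, where [xh] encodes the honest
   party's input; [coin_of_view c xh] is its inverse. *)
Definition coin_of_view (c : bool) (xh : 'F_p) (t : 'F_p * sim_msg p) : coin p :=
  if c then
    let: (r1, (r2, (su, sv, sw), (d2, e2))) := t in
    (r1, r2, (r1 + su - d2, xh - r2 + sv - e2), (su, sv, sw))
  else
    let: (r2, (r1, (u2, v2, w2), (d1, e1))) := t in
    let su := xh - r1 - d1 in let sv := r2 - e1 in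
    (r1, r2, (u2 + su, v2 + sv), (su, sv, (u2 + su) * (v2 + sv) - w2)).

Definition view_of_coin (c : bool) (xh : 'F_p) (w : coin p) : 'F_p * sim_msg p :=
  let: (r1, r2, (u, v), (su, sv, sw)) := w in
  if c then (r1, (r2, (su, sv, sw), (r1 - (u - su), xh - r2 - (v - sv))))
  else (r2, (r1, (u - su, v - sv, u * v - sw), (xh - r1 - su, r2 - sv))).

Lemma coin_of_viewK c xh : cancel (coin_of_view c xh) (view_of_coin c xh).
Proof.
by case: c => -[rc [[rh [[ui vi] wi]] [dh eh]]] /=; congr (_, (_, (_, _, _), (_, _))); ring.
Qed.

Lemma view_of_coinK c xh : cancel (view_of_coin c xh) (coin_of_view c xh).
Proof.
by case: c => -[[[r1 r2] [u v]] [[su sv] sw]] /=; congr (_, _, (_, _), (_, _, _)); ring.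
Qed.

End CoinsAndViews.

(* A party's share of [x * y] from its own shares of [x, y, u, v, w] and the
   other party's openings [dh, eh] of [x - u, y - v]; only the lead party adds
   the public term [d * e]. *)
Definition beaver_share (F : ringType) (lead : bool) (xi yi ui vi wi dh eh : F) : F :=
  let d := xi - ui + dh in let e := yi - vi + eh in
  wi + ui * e + vi * d + (if lead then d * e else 0).

Section Simulation.
Variables (R : realType) (n p : nat) (delta : R) (rnd : R -> R).
Hypotheses (delta_gt0 : 0 < delta) (rnd_nearest : nearest_rounding p delta rnd).
Hypothesis n_gt1 : (1 < n)%N.

Definition own_share (c : bool) (xc : 'I_n -> R) (rc : {ffun 'I_n -> 'F_p})
    (st : {ffun 'I_n -> sim_msg p}) (j : 'I_n) : 'F_p :=
  let: (rh, (ui, vi, wi), (dh, eh)) := st j in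
  let xi := phi p delta (ztil rnd xc j) - rc j in
  if c then beaver_share true xi rh ui vi wi dh eh
  else beaver_share false rh xi ui vi wi dh eh.

Definition simulator (c : bool) (L : leak R n) (xc : 'I_n -> R)
    (rc : {ffun 'I_n -> 'F_p}) (r : R) (st : {ffun 'I_n -> sim_msg p}) : msgs R n p :=
  Msgs (if c then l_eps2 L else l_eps1 L) (if c then l_cross21 L else l_cross12 L)
    (fun j => (st j).1.1) (fun j => (st j).1.2) (fun j => (st j).2)
    (decode_a p delta L r - \sum_(j < n) own_share c xc rc st j).

Definition coins_of_view (c : bool) (x1 x2 : 'I_n -> R)
    (t : {ffun 'I_n -> 'F_p} * {ffun 'I_n -> sim_msg p}) : coins n p :=
  [ffun j => coin_of_view c (if c then yF p delta rnd x2 j else xF p delta rnd x1 j)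
                          (t.1 j, t.2 j)].

Lemma sum_own_share c (x1 x2 : 'I_n -> R) rc st :
  \sum_(j < n) own_share c (if c then x1 else x2) rc st j
  = if c then as1 delta rnd x1 x2 (coins_of_view c x1 x2 (rc, st))
    else as2 delta rnd x1 x2 (coins_of_view c x1 x2 (rc, st)).
Proof.
case: c; apply: eq_bigr => j _;
  unfold zs1, zs2, dd, ee, d1, d2, e1, e2, xs1, xs2, ys1, ys2, us1, vs1, ws1, us2, vs2, ws2;
  rewrite /own_share /beaver_share !ffunE /=;
  case: (st j) => -[rh [[ui vi] wi]] [dh eh] /=; ring.
Qed.

Lemma real_view_coins_of_view c (x1 x2 : 'I_n -> R) t :
  real_view delta rnd c x1 x2 (coins_of_view c x1 x2 t)
  = ideal_view rnd (simulator c) c x1 x2 t.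
Proof.
case: t => rc st.
have a_E b : decode_a p delta (leakage rnd x1 x2) (pearson x1 x2)
  = as1 delta rnd x1 x2 (coins_of_view b x1 x2 (rc, st))
    + as2 delta rnd x1 x2 (coins_of_view b x1 x2 (rc, st)).
  by rewrite decode_a_leakage // as1_add_as2.
case: c; rewrite /real_view /ideal_view /simulator /=; (congr View; last congr Msgs).
all: try (apply: functional_extensionality => j;
  unfold d1, d2, e1, e2, xs1, xs2, ys1, ys2, us1, vs1, ws1, us2, vs2, ws2; rewrite !ffunE;
  case: (st j) => -[rh [[ui vi] wi]] [dh eh] /=; do 2 try congr (_, _); ring).
- by rewrite (a_E true) (sum_own_share true x1 x2); ring.
- by rewrite (a_E false) (sum_own_share false x1 x2); ring.
Qed.

Lemma simulation_exact c (x1 x2 : 'I_n -> R) (D : view R n p -> bool) :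
  prob R [pred om : coins n p | D (real_view delta rnd c x1 x2 om)]
  = prob R [pred t : {ffun 'I_n -> 'F_p} * {ffun 'I_n -> sim_msg p} |
             D (ideal_view rnd (simulator c) c x1 x2 t)].
Proof.
apply: (@prob_bij _ _ _ (coins_of_view c x1 x2)) => [|t /=].
  exact: ffun_pair_bij (fun j => coin_of_viewK c _) (fun j => view_of_coinK c _).
by rewrite real_view_coins_of_view.
Qed.

End Simulation.

Theorem proposition1 (R : realType) (n p : nat) (delta Rb : R) (rnd : R -> R) :
  (2 <= n)%N -> prime p -> (2 < p)%N -> 0 < delta -> 0 < Rb ->
  Rb <= n%:R / delta ->
  (n.-1)%:R / delta ^+ 2 + n%:R * (Rb / delta + 1 / 4) <= (Mp p)%:R ->
  nearest_rounding p delta rnd ->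
  (* correctness: both participants output r *)
  (forall x1 x2 : 'I_n -> R, nonconst x1 -> nonconst x2 ->
     (forall j, `|ztil rnd x1 j| <= Rb /\ `|ztil rnd x2 j| <= Rb) ->
     forall om : coins n p, protocol_output delta rnd x1 x2 om = pearson x1 x2)
  /\
  (* controlled leakage: for each corrupted party there is a simulator *)
  (forall c : bool,
     exists (ST : finType)
            (Sim : leak R n -> ('I_n -> R) -> {ffun 'I_n -> 'F_p} -> R -> ST -> msgs R n p),
     forall x1 x2 : 'I_n -> R, nonconst x1 -> nonconst x2 ->
     (forall j, `|ztil rnd x1 j| <= Rb /\ `|ztil rnd x2 j| <= Rb) ->
     forall D : view R n p -> bool,
       prob R [pred om : coins n p | D (real_view delta rnd c x1 x2 om)]
       = prob R [pred t : {ffun 'I_n -> 'F_p} * ST |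
                   D (ideal_view rnd Sim c x1 x2 t)]).
Proof.
move=> n_gt1 p_pr p_gt2 delta_gt0 Rb_gt0 _ params rnd_nearest; split.
  move=> x1 x2 x1_nc x2_nc ztil_le om.
  exact: (protocol_output_correct n_gt1 p_pr p_gt2 delta_gt0 (ltW Rb_gt0)).
move=> c; exists _, (@simulator R n p delta rnd c) => x1 x2 _ _ _ D.
exact: simulation_exact.
Qed.
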